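(* Let $0<p<1$ and flip a coin showing heads (H) with probability $p$ and tails (T) with probability $1-p$ independently until a prescribed string $S$ first appears as consecutive flips; let $Y$ be the number of flips. Then for every integer $n\ge1$: if $S=\mathrm{H}^k$ with $k\ge1$, \[ E(Y^n) = \sum_{\pi\in\Pi_n} (-1)^{n-|\pi|} |\pi|! \prod_{B\in \pi} \sum_{i=1}^k \frac{i^{|B|} - (i-1)^{|B|}}{p^i}; \] if $S=\mathrm{H}^k\mathrm{T}^\ell$ with $k,\ell\ge1$, \[ E(Y^n) = \sum_{\pi\in\Pi_n} (-1)^{n-|\pi|} |\pi|! \prod_{B\in \pi} \frac{(k+\ell)^{|B|}-(k+\ell-1)^{|B|}}{p^k(1-p)^\ell}. \]
   Context: $\Pi_n$ is the set of set partitions of $\{1,\dots,n\}$; $|\pi|$ is the number of blocks of $\pi$ and $|B|$ the size of block $B$. Convention $0^0=1$. *)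

(* Coin flips: true = heads (H), false = tails (T). *)
From HB Require Import structures.
From mathcomp Require Import all_boot all_order all_algebra.
From mathcomp Require Import all_classical all_reals all_analysis.
Set Implicit Arguments. Unset Strict Implicit. Unset Printing Implicit Defensive.
Import Order.TTheory GRing.Theory Num.Theory.
Local Open Scope ring_scope.

Definition first_occ_at (S w : seq bool) : bool :=
  suffix S w && ~~ infix S (take (size w).-1 w).

Definition word_prob (R : realType) (p : R) (w : seq bool) : R :=
  \prod_(b <- w) (if b then p else 1 - p).

Definition waiting_pmf (R : realType) (p : R) (S : seq bool) (m : nat) : R :=
  \sum_(w : m.-tuple bool | first_occ_at S w) word_prob p w.

Definition moment_partial (R : realType) (p : R) (S : seq bool) (n N : nat) : R :=
  \sum_(m < N) (m%:R ^+ n) * waiting_pmf p S m.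

Definition set_partitions (n : nat) : {set {set {set 'I_n}}} :=
  finset.finset (fun P : {set {set 'I_n}} => finset.partition P (finset.setT : {set 'I_n})).

From HB Require Import structures.
From mathcomp Require Import all_boot all_order all_algebra.
From mathcomp Require Import all_classical all_reals all_analysis.
From mathcomp Require Import zify ring lra.
(* Re-imported so that [set0], [subsetP], ... denote finite sets, not classical sets. *)
From mathcomp Require Import fintype finset.
Import Order.TTheory GRing.Theory Num.Theory.
Import numFieldNormedType.Exports.
Local Open Scope classical_set_scope.
Local Open Scope ring_scope.
Set Implicit Arguments. Unset Strict Implicit. Unset Printing Implicit Defensive.

(* Write A(m) = P(Y > m) and K = |S|. For both strings the tail satisfies a renewal
   identity A(m) = sum_(i=1..K) P(Y = m + i) a_i: for H^k, splitting the words that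
   avoid S according to their final run of heads gives a_i = p^-i; H^k T^l has no
   self-overlap, so Y = m + k + l exactly when S is avoided up to m and then written
   out, whence a_(k+l) = 1/(p^k (1-p)^l) and the other a_i vanish.
   Summation by parts gives E(Y^(n+1)) = sum_m ((m+1)^(n+1) - m^(n+1)) A(m); inserting
   the renewal identity and expanding (x-i+1)^(n+1) - (x-i)^(n+1) binomially yields
     E(Y^(n+1)) = sum_j C(n+1, j+1) (-1)^j c_(j+1) E(Y^(n-j)),
     c_j = sum_i a_i (i^j - (i-1)^j),
   the moments being finite by induction since their partial sums are monotone and
   bounded. The partition sum obeys the same recursion: |pi|! prod_B w(|B|) weighs the
   orderings of the blocks of pi, and removing the first block of an ordered partition
   gives the recursion for w(j) = (-1)^(j-1) c_j. *)

(** * Ordered set partitions *)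

Lemma sum_nonempty_subsets_card (V : nmodType) (T : finType) (f : nat -> V)
    (S : {set T}) :
  \sum_(B | (B != set0) && (B \subset S)) f #|B| =
  \sum_(j < #|S|) f j.+1 *+ 'C(#|S|, j.+1).
Proof.
pose card_bin (B : {set T}) : 'I_#|S|.+1 := inord #|B|.
have card_binE (B : {set T}) : B \subset S -> card_bin B = #|B| :> nat.
  by move=> /subset_leq_card le; rewrite inordK.
rewrite (partition_big card_bin xpredT) //= big_ord_recl big_pred0 ?add0r; last first.
  move=> B; apply/negbTE/andP => -[/andP[B0 BS] /eqP/(congr1 val)] /=.
  by rewrite card_binE // => /eqP; rewrite cards_eq0 (negbTE B0).
apply: eq_bigr => j _.
rewrite (eq_bigl (fun B => B \in [set B : {set T} | B \subset S & #|B| == j.+1])) => [|B].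
  rewrite (eq_bigr (fun=> f j.+1)) => [|B]; first by rewrite sumr_const cards_draws.
  by move=> /[!inE] /andP[_ /eqP ->].
rewrite !inE; apply/idP/idP => [/andP[/andP[B0 BS] /eqP/(congr1 val)]|/andP[BS /eqP cB]].
  by rewrite /= card_binE // BS /bump add1n => /eqP.
by rewrite BS -card_gt0 cB; apply/eqP/val_inj; rewrite /= card_binE // /bump add1n.
Qed.

Lemma sum_partitions_remove_block (V : nmodType) (T : finType)
    (g : {set {set T}} -> V) (S B : {set T}) :
  B != set0 -> B \subset S ->
  \sum_(P | partition P S && (B \in P)) g (P :\ B) =
  \sum_(P | partition P (S :\: B)) g P.
Proof.
move=> B0 BS.
rewrite (reindex_onto (fun P => B |: P) (fun P => P :\ B)) => [|P /andP[_ BP]];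
  last by rewrite setD1K.
apply: eq_big => [P|P /andP[_ /eqP ->] //].
apply/idP/idP => [/andP[/andP[PS _] /eqP <-]|PSB]; first exact: partitionD1 PS (setU11 _ _).
have BP : B \notin P.
  apply/negP => /(partitionS PSB); case/set0Pn: B0 => x xB /subsetP/(_ x xB).
  by rewrite inE xB.
rewrite (setU1K BP) eqxx setU11 !andbT.
have -> : S = B :|: (S :\: B) by rewrite -{1}(setID S B) (setIidPr BS).
by apply: partitionU1 PSB B0 _; rewrite disjoints_subset setDE setCI setCK subsetUr.
Qed.

Section OrderedPartitions.
Variables (R : comPzSemiRingType) (T : finType) (w : nat -> R).

Definition ordered_partition_weight (P : {set {set T}}) : R :=
  (#|P|)`!%:R * \prod_(B in P) w #|B|.

Lemma ordered_partition_weightD1 (P : {set {set T}}) (S : {set T}) :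
  partition P S -> S != set0 ->
  ordered_partition_weight P =
  \sum_(B in P) w #|B| * ordered_partition_weight (P :\ B).
Proof.
move=> PS S0.
have P0 : (0 < #|P|)%N.
  rewrite card_gt0; apply: contra S0 => /eqP P0.
  by rewrite -(cover_partition PS) P0 /cover big_set0.
have termE B : B \in P -> w #|B| * ordered_partition_weight (P :\ B) =
    (#|P|.-1)`!%:R * \prod_(C in P) w #|C|.
  move=> BP; rewrite /ordered_partition_weight [in RHS](cardsD1 B P) BP add1n /=.
  rewrite (bigD1 B BP) mulrCA; congr (_ * (_ * _)).
  by apply: eq_bigl => C; rewrite in_setD1 andbC.
rewrite (eq_bigr _ termE) sumr_const /ordered_partition_weight -mulrnAl.
by rewrite -mulrnA mulnC -[in LHS](prednK P0) factS prednK.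
Qed.

Variable F : nat -> R.
Hypothesis F0 : F 0 = 1.
Hypothesis FS : forall m,
  F m.+1 = \sum_(j < m.+1) 'C(m.+1, j.+1)%:R * w j.+1 * F (m - j)%N.

Lemma sum_ordered_partition_weight (S : {set T}) :
  \sum_(P | partition P S) ordered_partition_weight P = F #|S|.
Proof.
have [m] := ubnP #|S|; elim: m S => // m IH S ltSm.
have [-> | S0] := eqVneq S set0.
  rewrite cards0 (big_pred1 set0) => [|P]; last by rewrite partition_set0.
  by rewrite /ordered_partition_weight cards0 big_set0 mulr1 F0.
have [s cardS] : exists s, #|S| = s.+1 by exists #|S|.-1; rewrite prednK // card_gt0.
under eq_bigr => P PS do rewrite (ordered_partition_weightD1 PS S0).
rewrite (exchange_big_dep (fun B => (B != set0) && (B \subset S))) /=; last first.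
  by move=> P B PS BP; rewrite (partition_neq0 PS BP) (partitionS PS BP).
under eq_bigr => B /andP[B0 BS].
  rewrite -mulr_sumr (sum_partitions_remove_block _ B0 BS) IH; last first.
    by rewrite cardsD (setIidPr BS); move: ltSm; rewrite -card_gt0 in B0; lia.
  rewrite cardsD (setIidPr BS).
  over.
rewrite (sum_nonempty_subsets_card (fun j => w j * F (#|S| - j)%N)) cardS FS.
by apply: eq_bigr => j _; rewrite subSS -mulrA mulr_natl.
Qed.

End OrderedPartitions.

Lemma sum_set_partitions_signed (R : comPzRingType) (c F : nat -> R) (n : nat) :
  F 0 = 1 ->
  (forall m, F m.+1 =
     \sum_(j < m.+1) 'C(m.+1, j.+1)%:R * ((-1) ^+ j * c j.+1) * F (m - j)%N) ->
  \sum_(P in set_partitions n)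
     (-1) ^+ (n - #|P|) * (#|P|)`!%:R * \prod_(B in P) c #|B| = F n.
Proof.
move=> F0 FS.
rewrite -[n in F n]card_ord -cardsT.
rewrite -(sum_ordered_partition_weight (w := fun j => (-1) ^+ j.-1 * c j) F0 FS).
apply: eq_big => [P | P]; first by rewrite inE.
rewrite inE => PT; rewrite /ordered_partition_weight big_split /= prodrXr.
have blocks_pred : (n - #|P| = \sum_(B in P) #|B|.-1)%N.
  suff : (\sum_(B in P) #|B|.-1 + #|P| = n)%N by lia.
  rewrite -sum1_card -big_split /= -[RHS]card_ord -cardsT (card_partition PT).
  by apply: eq_bigr => B BP; rewrite addn1 prednK // card_gt0 (partition_neq0 PT BP).
by rewrite blocks_pred mulrCA mulrA.
Qed.

(** * Moments of a waiting time from a renewal identity for its tail *)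

Lemma sub_exprB (R : comPzRingType) (x y z : R) (n : nat) :
  (x - y) ^+ n.+1 - (x - z) ^+ n.+1 =
  \sum_(j < n.+1) 'C(n.+1, j.+1)%:R * ((-1) ^+ j * (z ^+ j.+1 - y ^+ j.+1)) * x ^+ (n - j)%N.
Proof.
rewrite !exprDn -sumrB big_ord_recl /= !expr0 !mulr1 subrr add0r.
apply: eq_bigr => j _; rewrite /bump /= add1n subSS (exprNn y) (exprNn z) exprS.
by rewrite -!mulrnAr -mulr_natl; ring.
Qed.

Lemma cvg_sum_seq (R : numFieldType) (I : eqType) (r : seq I)
    (f : I -> nat -> R) (l : I -> R) :
  (forall i, i \in r -> f i @ \oo --> l i) ->
  (fun N => \sum_(i <- r) f i N) @ \oo --> \sum_(i <- r) l i.
Proof.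
elim: r => [|x r IH] fl.
  by under eq_fun do rewrite big_nil; rewrite big_nil; exact: cvg_cst.
under eq_fun do rewrite big_cons.
rewrite big_cons; apply: cvgD; first by apply: fl; rewrite mem_head.
by apply: IH => i ir; apply: fl; rewrite in_cons ir orbT.
Qed.

Definition partial_moment (R : pzSemiRingType) (u : nat -> R) (n N : nat) : R :=
  \sum_(m < N) m%:R ^+ n * u m.

Definition partial_tail_moment (R : pzRingType) (A : nat -> R) (n N : nat) : R :=
  \sum_(m < N) (m.+1%:R ^+ n - m%:R ^+ n) * A m.

Lemma partial_momentS (R : pzSemiRingType) (u : nat -> R) n N :
  partial_moment u n N.+1 = partial_moment u n N + N%:R ^+ n * u N.
Proof. by rewrite /partial_moment big_ord_recr. Qed.

Lemma partial_tail_momentS (R : pzRingType) (A : nat -> R) n N :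
  partial_tail_moment A n N.+1 =
  partial_tail_moment A n N + (N.+1%:R ^+ n - N%:R ^+ n) * A N.
Proof. by rewrite /partial_tail_moment big_ord_recr. Qed.

Lemma ler_natX (R : numDomainType) (e M N : nat) :
  (M <= N)%N -> M%:R ^+ e <= N%:R ^+ e :> R.
Proof. by move=> MN; apply: lerXn2r; rewrite ?nnegrE ?ler_nat. Qed.

Section TailMoments.
(* [u] is the law of a waiting time [Y >= K] and [A m = P(Y > m)] its tail. *)
Variables (R : realType) (u A a : nat -> R) (K : nat).
Hypothesis K_gt0 : (0 < K)%N.
Hypothesis u_ge0 : forall m, 0 <= u m.
Hypothesis A_ge0 : forall m, 0 <= A m.
Hypothesis A0 : A 0 = 1.
Hypothesis A_step : forall m, A m = A m.+1 + u m.+1.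
Hypothesis u_lt : forall m, (m < K)%N -> u m = 0.
Hypothesis A_renewal : forall m, A m = \sum_(1 <= i < K.+1) u (m + i)%N * a i.

Let c j := \sum_(1 <= i < K.+1) (i%:R ^+ j - i.-1%:R ^+ j) * a i.

Lemma tail_nonincreasing : nonincreasing_seq A.
Proof. by apply/nonincreasing_seqP => m; rewrite [leRHS]A_step lerDl. Qed.

Lemma tail_cvg0 : A @ \oo --> 0.
Proof.
have A_cvg : cvgn A.
  by apply: nonincreasing_is_cvgn tail_nonincreasing _; exists 0 => _ [m _ <-].
have u_cvg0 i : (0 < i)%N -> (fun m => u (m + i)%N) @ \oo --> 0.
  move=> i_gt0; rewrite -(subrr (limn A)).
  have -> : (fun m => u (m + i)%N) = (fun m => A (m + i.-1)%N - A (m + i)%N).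
    apply: funext => m.
    by rewrite (A_step (m + i.-1)) -addnS prednK // addrAC subrr add0r.
  by apply: cvgB; rewrite (cvg_shiftn _ A).
have -> : A = fun m => \sum_(1 <= i < K.+1) u (m + i)%N * a i by apply: funext.
have sum0 : \sum_(1 <= i < K.+1) 0 * a i = 0 :> R by rewrite big1 // => i; rewrite mul0r.
rewrite -[X in _ --> X]sum0.
apply: cvg_sum_seq => i; rewrite mem_index_iota => /andP[i_gt0 _].
apply: cvgMl; exact: u_cvg0.
Qed.

Lemma partial_moment0 N : partial_moment u 0 N.+1 = 1 - A N.
Proof.
elim: N => [|N IH]; rewrite partial_momentS expr0 mul1r.
  by rewrite /partial_moment big_ord0 add0r A0 u_lt ?subrr.
by rewrite IH (A_step N) opprD addrA subrK.
Qed.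

Lemma partial_moment_abel n N :
  partial_moment u n.+1 N.+1 = partial_tail_moment A n.+1 N - N%:R ^+ n.+1 * A N.
Proof.
elim: N => [|N IH].
  rewrite partial_momentS /partial_moment /partial_tail_moment !big_ord0.
  by rewrite expr0n /= !mul0r subrr add0r.
by rewrite partial_momentS IH partial_tail_momentS (A_step N); ring.
Qed.

Lemma partial_moment_shift e i N : (i <= K)%N ->
  \sum_(m < N) (m + i)%:R ^+ e * u (m + i)%N = partial_moment u e (N + i)%N.
Proof.
move=> iK; elim: N => [|N IH].
  rewrite big_ord0 add0n /partial_moment big1 // => m _.
  by rewrite u_lt ?mulr0 // (leq_trans (ltn_ord m) iK).
by rewrite big_ord_recr /= IH addSn partial_momentS.
Qed.

Lemma partial_tail_moment_renewal n N :
  partial_tail_moment A n.+1 N = \sum_(1 <= i < K.+1) a i *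
    \sum_(j < n.+1) 'C(n.+1, j.+1)%:R *
      ((-1) ^+ j * (i%:R ^+ j.+1 - i.-1%:R ^+ j.+1)) * partial_moment u (n - j)%N (N + i)%N.
Proof.
rewrite /partial_tail_moment; under eq_bigr do rewrite A_renewal mulr_sumr.
rewrite exchange_big /=; apply: eq_big_seq => i; rewrite mem_index_iota => /andP[i_gt0 iK].
under [in RHS]eq_bigr do rewrite -(partial_moment_shift _ _ iK) mulr_sumr.
rewrite exchange_big /= mulr_sumr; apply: eq_bigr => m _.
have -> : m.+1%:R = (m + i)%:R - i.-1%:R :> R.
  by rewrite -natrB; [congr _%:R |]; lia.
have -> : m%:R = (m + i)%:R - i%:R :> R by rewrite natrD addrK.
rewrite sub_exprB mulr_suml mulr_sumr; apply: eq_bigr => j _; ring.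
Qed.

Lemma partial_tail_moment_le n N d :
  partial_tail_moment A n.+1 N - N%:R ^+ n.+1 * A (d + N)%N <=
  partial_moment u n.+1 (d + N)%N.+1.
Proof.
elim: d => [|d IH]; first by rewrite add0n partial_moment_abel.
have : N%:R ^+ n.+1 * u (d + N)%N.+1 <= (d + N)%N.+1%:R ^+ n.+1 * u (d + N)%N.+1.
  by rewrite ler_wpM2r // ler_natX // ltnW // ltnS leq_addl.
rewrite addSn (partial_momentS _ _ (d + N)%N.+1); move: IH; rewrite (A_step (d + N)); lra.
Qed.

Lemma partial_moment_cvg0 : partial_moment u 0 @ \oo --> (1 : R).
Proof.
rewrite -cvg_shiftS /=.
have -> : (fun N => partial_moment u 0 N.+1) = (fun N => 1 - A N).
  by apply: funext => N; exact: partial_moment0.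
suff : (fun N => 1 - A N) @ \oo --> (1 - 0 : R) by rewrite subr0.
apply: cvgB; [exact: cvg_cst | exact: tail_cvg0].
Qed.

Let moment_rec k := \sum_(j < k.+1)
  'C(k.+1, j.+1)%:R * ((-1) ^+ j * c j.+1) * limn (partial_moment u (k - j)%N).

Lemma partial_tail_moment_cvg k :
  (forall j, (j <= k)%N -> cvgn (partial_moment u j)) ->
  partial_tail_moment A k.+1 @ \oo --> moment_rec k.
Proof.
move=> IH; rewrite (funext (partial_tail_moment_renewal k)).
have -> : moment_rec k = \sum_(1 <= i < K.+1) a i * \sum_(j < k.+1) 'C(k.+1, j.+1)%:R *
    ((-1) ^+ j * (i%:R ^+ j.+1 - i.-1%:R ^+ j.+1)) * limn (partial_moment u (k - j)%N).
  under [RHS]eq_bigr do rewrite mulr_sumr.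
  rewrite [RHS]exchange_big /=; apply: eq_bigr => j _.
  rewrite /c !mulr_sumr mulr_suml; apply: eq_bigr => i _; ring.
apply: cvg_sum_seq => i _; apply: cvgMr; apply: cvg_sum_seq => j _; apply: cvgMr.
by rewrite (cvg_shiftn i (partial_moment u (k - j)%N)); apply: IH; exact: leq_subr.
Qed.

Lemma partial_moment_cvgS k :
  (forall j, (j <= k)%N -> cvgn (partial_moment u j)) ->
  partial_moment u k.+1 @ \oo --> moment_rec k.
Proof.
move=> IH; have G_cvg := partial_tail_moment_cvg IH.
set G := partial_tail_moment A k.+1; set M := partial_moment u k.+1.
have G_nd : nondecreasing_seq G.
  apply/nondecreasing_seqP => N; rewrite /G partial_tail_momentS lerDl.
  by rewrite mulr_ge0 // subr_ge0 ler_natX.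
have G_le N : G N <= moment_rec k.
  rewrite -(cvg_lim (@Rhausdorff R) G_cvg).
  by apply: nondecreasing_cvgn_le => //; exact: cvgP G_cvg.
have M_nd : nondecreasing_seq M.
  apply/nondecreasing_seqP => N; rewrite /M partial_momentS lerDl.
  by rewrite mulr_ge0 // exprn_ge0.
have M_le N : M N <= moment_rec k.
  apply: le_trans (M_nd _ _ (leqnSn N)) _; rewrite /M partial_moment_abel.
  by apply: le_trans (G_le N); rewrite gerDl oppr_le0 mulr_ge0 // exprn_ge0.
have M_cvg : cvgn M.
  by apply: nondecreasing_is_cvgn M_nd _; exists (moment_rec k) => _ [N _ <-].
have G_le_limM N : G N <= limn M.
  (* let d -> oo in [partial_tail_moment_le k N d], using A -> 0 *)
  have tail_cvg : (fun d => limn M + N%:R ^+ k.+1 * A (d + N)%N) @ \oo --> limn M.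
    suff : (fun d => limn M + N%:R ^+ k.+1 * A (d + N)%N) @ \oo -->
        limn M + N%:R ^+ k.+1 * 0 by rewrite mulr0 addr0.
    apply: cvgD; first exact: cvg_cst.
    by apply: cvgMr; rewrite (cvg_shiftn N A); exact: tail_cvg0.
  rewrite -(cvg_lim (@Rhausdorff R) tail_cvg); apply: limr_ge; first exact: cvgP tail_cvg.
  apply: nearW => d; have := partial_tail_moment_le k N d.
  have := nondecreasing_cvgn_le M_nd M_cvg (d + N)%N.+1; rewrite -/G -/M; lra.
suff <- : limn M = moment_rec k by [].
apply/le_anti/andP; split; first by apply: limr_le => //; exact: nearW.
rewrite -(cvg_lim (@Rhausdorff R) G_cvg); apply: limr_le; first exact: cvgP G_cvg.
exact: nearW.
Qed.

Lemma partial_moment_is_cvg n : cvgn (partial_moment u n).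
Proof.
elim/ltn_ind: n => -[_ | k IH]; first exact: cvgP partial_moment_cvg0.
by apply: cvgP (partial_moment_cvgS _) => j jk; apply: IH.
Qed.

Lemma partial_moment_cvg_partitions n :
  partial_moment u n @ \oo -->
  \sum_(P in set_partitions n) (-1) ^+ (n - #|P|) * (#|P|)`!%:R * \prod_(B in P) c #|B|.
Proof.
rewrite (sum_set_partitions_signed (F := fun n => limn (partial_moment u n))).
- exact: partial_moment_is_cvg.
- exact: (cvg_lim (@Rhausdorff R) partial_moment_cvg0).
- move=> m; apply: (cvg_lim (@Rhausdorff R)).
  by apply: partial_moment_cvgS => j _; exact: partial_moment_is_cvg.
Qed.

End TailMoments.

(** * Words of coin flips *)

Lemma sum_tuple0 (V : nmodType) (T : finType) (G : seq T -> V) :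
  \sum_(t : 0.-tuple T) G t = G [::].
Proof. by rewrite (big_pred1 [tuple]) // => t; symmetry; apply/eqP; exact: tuple0. Qed.

Lemma sum_tupleS (V : nmodType) (T : finType) n (G : seq T -> V) :
  \sum_(t : n.+1.-tuple T) G t = \sum_(x : T) \sum_(t : n.-tuple T) G (x :: t).
Proof.
rewrite pair_big /= (reindex (fun xt : T * n.-tuple T => [tuple of xt.1 :: xt.2])) //=.
exists (fun t => (thead t, [tuple of behead t])) => [[x t] _ | t _] /=.
  by rewrite theadE; congr pair; apply: val_inj.
by apply: val_inj => /=; case: t => -[|x s].
Qed.

Lemma sum_tuple_cat (V : nmodType) (T : finType) m n (G : seq T -> V) :
  \sum_(t : (m + n).-tuple T) G t =
  \sum_(w : m.-tuple T) \sum_(v : n.-tuple T) G (w ++ v).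
Proof.
elim: m G => [|m IH] G.
  by rewrite (sum_tuple0 (fun w => \sum_(v : n.-tuple T) G (w ++ v))).
rewrite sum_tupleS (sum_tupleS m (fun w => \sum_(v : n.-tuple T) G (w ++ v))).
by apply: eq_bigr => x _; exact: (IH (fun s => G (x :: s))).
Qed.

Lemma sum_tuple_rcons (V : nmodType) (T : finType) m (G : seq T -> V) :
  \sum_(t : m.+1.-tuple T) G t = \sum_(w : m.-tuple T) \sum_(x : T) G (rcons w x).
Proof.
elim: m G => [|m IH] G.
  rewrite sum_tupleS (sum_tuple0 (fun w => \sum_(x : T) G (rcons w x))).
  by apply: eq_bigr => x _; exact: (sum_tuple0 (fun t => G (x :: t))).
rewrite sum_tupleS (sum_tupleS m (fun w => \sum_(x : T) G (rcons w x))).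
by apply: eq_bigr => x _; exact: (IH (fun s => G (x :: s))).
Qed.

Definition trailing_heads (w : seq bool) : nat := find negb (rev w).

Lemma trailing_heads_rcons w b :
  trailing_heads (rcons w b) = if b then (trailing_heads w).+1 else 0%N.
Proof. by rewrite /trailing_heads rev_rcons; case: b. Qed.

Lemma suffix_nseq_true k w : suffix (nseq k true) w = (k <= trailing_heads w)%N.
Proof.
elim/last_ind: w k => [|w b IH] [|k]; [by [] | by rewrite suffixs0 | by rewrite suffix0s |].
have -> : nseq k.+1 true = rcons (nseq k true) true.
  by rewrite -cats1 -[[:: true]]/(nseq 1 true) -nseqD addn1.
by rewrite suffix_rcons trailing_heads_rcons IH; case: b.
Qed.

Lemma trailing_heads_lt k w :
  ~~ infix (nseq k true) w -> (trailing_heads w < k)%N.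
Proof.
by apply: contraR; rewrite -leqNgt -suffix_nseq_true; exact: suffixW.
Qed.

Section HeadsTails.
Variables k l : nat.
Hypotheses (k_gt0 : (0 < k)%N) (l_gt0 : (0 < l)%N).
Let S := nseq k true ++ nseq l false.

Lemma size_heads_tails : size S = (k + l)%N.
Proof. by rewrite size_cat !size_nseq. Qed.

Lemma count_take_heads_tails j : count id (take j S) = minn j k.
Proof.
rewrite take_cat size_nseq; case: ltnP => [j_lt | k_le].
  by rewrite take_nseq ?count_nseq /= ?mul1n //; lia.
have no_heads i : count id (take i (nseq l false)) = 0%N.
  by elim: l i => [|l' IH] [|i] //=; exact: IH.
by rewrite count_cat count_nseq no_heads; lia.
Qed.

Lemma count_drop_heads_tails j : count id (drop j S) = (k - j)%N.
Proof.
rewrite drop_cat size_nseq; case: ltnP => [j_lt | k_le].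
  by rewrite drop_nseq count_cat !count_nseq /= mul1n mul0n addn0.
by rewrite drop_nseq count_nseq; lia.
Qed.

(* A proper prefix of S has more heads than the suffix of S of the same length. *)
Lemma heads_tails_no_border w j : (0 < j < k + l)%N -> ~~ suffix S (w ++ take j S).
Proof.
move=> /andP[j_gt0 j_lt]; apply/negP => /suffixP[s w_S].
have j_le : (j <= size S)%N by rewrite size_heads_tails ltnW.
have sizes : (size w + j = size (s : seq bool) + (k + l))%N.
  by rewrite -size_heads_tails -[in LHS](size_takel j_le) -!size_cat w_S.
have := drop_size_cat (take j S) (erefl (size w)).
rewrite w_S drop_cat ifN -?leqNgt; last by lia.
rewrite (_ : size w - size (s : seq bool) = k + l - j)%N; last by lia.
by move=> /(congr1 (count id)); rewrite count_take_heads_tails count_drop_heads_tails; lia.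
Qed.

Lemma infix_cat_take_heads_tails w j :
  (j < k + l)%N -> infix S (w ++ take j S) = infix S w.
Proof.
elim: j => [|j IH] j_lt; first by rewrite take0 cats0.
have j_lt_size : (j < size S)%N by rewrite size_heads_tails; lia.
rewrite (take_nth false j_lt_size) -rcons_cat infix_rconsl rcons_cat -take_nth //.
by rewrite (negbTE (heads_tails_no_border _ _)) ?IH //; lia.
Qed.

Lemma first_occ_at_heads_tails w v :
  size v = (k + l)%N -> first_occ_at S (w ++ v) = (v == S) && ~~ infix S w.
Proof.
move=> size_v; rewrite /first_occ_at -[S in suffix S _]cat0s suffix_catl ?size_heads_tails //.
rewrite suffix0s andbT eq_sym; have [-> /= | //] := eqVneq v S.
rewrite size_cat size_heads_tails -subn1 -addnBA ?addn_gt0 ?k_gt0 //.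
by rewrite take_cat ltnNge leq_addr /= addKn infix_cat_take_heads_tails //; lia.
Qed.

End HeadsTails.

(** * Waiting times for H^k and H^k T^l *)

Section WaitingTime.
Variables (R : realType) (p : R).

Lemma word_prob_cat w v : word_prob p (w ++ v) = word_prob p w * word_prob p v.
Proof. by rewrite /word_prob big_cat. Qed.

Lemma word_prob_rcons w b :
  word_prob p (rcons w b) = word_prob p w * (if b then p else 1 - p).
Proof. by rewrite -cats1 word_prob_cat /word_prob big_seq1. Qed.

Lemma word_prob_nseq b n : word_prob p (nseq n b) = (if b then p else 1 - p) ^+ n.
Proof.
elim: n => [|n IH]; first by rewrite /word_prob big_nil.
by rewrite /= -cat1s word_prob_cat IH /word_prob big_seq1 exprS.
Qed.

Lemma word_prob_ge0 w : 0 <= p -> p <= 1 -> 0 <= word_prob p w.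
Proof. by move=> p_ge0 p_le1; apply: prodr_ge0 => -[] _; rewrite ?subr_ge0. Qed.

(* The tail P(Y > m) of the waiting time for S. *)
Definition avoid_prob (S : seq bool) (m : nat) : R :=
  \sum_(w : m.-tuple bool | ~~ infix S w) word_prob p w.

Lemma avoid_prob_ge0 S m : 0 <= p -> p <= 1 -> 0 <= avoid_prob S m.
Proof. by move=> p_ge0 p_le1; apply: sumr_ge0 => w _; exact: word_prob_ge0. Qed.

Lemma waiting_pmf_ge0 S m : 0 <= p -> p <= 1 -> 0 <= waiting_pmf p S m.
Proof. by move=> p_ge0 p_le1; apply: sumr_ge0 => w _; exact: word_prob_ge0. Qed.

Lemma avoid_prob0 S : S != [::] -> avoid_prob S 0 = 1.
Proof.
move=> S_nil; rewrite /avoid_prob big_mkcond.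
rewrite (sum_tuple0 (fun w => if ~~ infix S w then word_prob p w else 0)) /=.
by rewrite S_nil /word_prob big_nil.
Qed.

Lemma waiting_pmf_lt_size S m : (m < size S)%N -> waiting_pmf p S m = 0.
Proof.
move=> m_lt; rewrite /waiting_pmf big1 // => w /andP[/size_suffix].
by rewrite size_tuple leqNgt m_lt.
Qed.

Lemma first_occ_at_rcons S w b :
  first_occ_at S (rcons w b) = suffix S (rcons w b) && ~~ infix S w.
Proof. by rewrite /first_occ_at size_rcons -cats1 take_size_cat. Qed.

Lemma avoid_probS S m : avoid_prob S m = avoid_prob S m.+1 + waiting_pmf p S m.+1.
Proof.
rewrite /avoid_prob /waiting_pmf big_mkcond [in RHS]big_mkcond [X in _ = _ + X]big_mkcond.
rewrite -big_split /= (sum_tuple_rcons m (fun w =>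
  (if ~~ infix S w then word_prob p w else 0) +
  (if first_occ_at S w then word_prob p w else 0))) /=.
apply: eq_bigr => w _.
rewrite big_bool /= !first_occ_at_rcons !infix_rconsl !word_prob_rcons.
case: (infix S w); case: (suffix S (rcons w true)); case: (suffix S (rcons w false));
  by rewrite /= ?addr0 ?add0r // -mulrDr addrC subrK mulr1.
Qed.

Section HeadsRun.
Variable k : nat.
Hypothesis k_gt0 : (0 < k)%N.
Let S := nseq k true.

Definition avoid_run_prob (m r : nat) : R :=
  \sum_(w : m.-tuple bool | ~~ infix S w && (trailing_heads w == r)) word_prob p w.

Lemma waiting_pmf_heads_rcons m : waiting_pmf p S m.+1 = p * avoid_run_prob m k.-1.
Proof.
rewrite /waiting_pmf /avoid_run_prob mulr_sumr big_mkcond [RHS]big_mkcond.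
rewrite (sum_tuple_rcons m (fun w => if first_occ_at S w then word_prob p w else 0)).
apply: eq_bigr => w _; rewrite big_bool /= !first_occ_at_rcons !suffix_nseq_true.
rewrite !trailing_heads_rcons !word_prob_rcons [(k <= 0)%N]leqNgt k_gt0 /= addr0 mulrC.
have [w_S | w_S] /= := boolP (infix S w); first by rewrite andbF.
move: (trailing_heads_lt w_S); rewrite andbT; move: (trailing_heads w) => t t_lt.
by rewrite (_ : (k <= t.+1)%N = (t == k.-1)) // -subn1; apply/idP/eqP; lia.
Qed.

Lemma avoid_run_probS m r : (r.+1 < k)%N ->
  avoid_run_prob m.+1 r.+1 = p * avoid_run_prob m r.
Proof.
move=> r_lt; rewrite /avoid_run_prob mulr_sumr big_mkcond [RHS]big_mkcond.
rewrite (sum_tuple_rcons m (fun w =>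
  if ~~ infix S w && (trailing_heads w == r.+1) then word_prob p w else 0)).
apply: eq_bigr => w _; rewrite big_bool /= !infix_rconsl !suffix_nseq_true.
rewrite !trailing_heads_rcons !word_prob_rcons /= andbF addr0 eqSS.
have [-> | _] /= := eqVneq (trailing_heads w) r; last by rewrite !andbF.
by rewrite leqNgt r_lt /= !andbT mulrC.
Qed.

Lemma avoid_run_probD m r j : (r + j < k)%N ->
  avoid_run_prob (m + j)%N (r + j)%N = p ^+ j * avoid_run_prob m r.
Proof.
elim: j => [|j IH] lt_k; first by rewrite !addn0 expr0 mul1r.
by rewrite !addnS avoid_run_probS ?IH ?exprS ?mulrA //; lia.
Qed.

Lemma avoid_prob_runs m : avoid_prob S m = \sum_(r < k) avoid_run_prob m r.
Proof.
rewrite /avoid_prob /avoid_run_prob big_mkcond.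
under [RHS]eq_bigr do rewrite big_mkcond.
rewrite [RHS]exchange_big /=; apply: eq_bigr => w _.
have [//= | w_S] := boolP (infix S w); first by rewrite big1.
rewrite (bigD1 (Ordinal (trailing_heads_lt w_S))) //= eqxx big1 ?addr0 // => r r_ne.
by rewrite ifN //; apply: contra r_ne => /eqP heads_r; apply/eqP/val_inj.
Qed.

Lemma waiting_pmf_heads m i : (0 < i <= k)%N ->
  waiting_pmf p S (m + i)%N = p ^+ i * avoid_run_prob m (k - i)%N.
Proof.
case: i => [//|i] /= i_lt.
rewrite addnS waiting_pmf_heads_rcons (_ : k.-1 = k - i.+1 + i)%N; last by lia.
by rewrite avoid_run_probD ?exprS ?mulrA //; lia.
Qed.

Lemma avoid_prob_heads_renewal m : p != 0 ->
  avoid_prob S m = \sum_(1 <= i < k.+1) waiting_pmf p S (m + i)%N / p ^+ i.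
Proof.
move=> p_neq0.
transitivity (\sum_(1 <= i < k.+1) avoid_run_prob m (k - i)%N).
  rewrite avoid_prob_runs -(big_mkord xpredT (avoid_run_prob m)) big_add1 /=.
  by rewrite (big_nat_rev _ _ _ _ _ (avoid_run_prob m)) add0n.
rewrite !big_nat; apply: eq_bigr => i i_bound.
by rewrite waiting_pmf_heads // mulrAC mulfV ?mul1r // expf_neq0.
Qed.

End HeadsRun.

Lemma waiting_pmf_heads_tails k l m : (0 < k)%N -> (0 < l)%N ->
  let S := nseq k true ++ nseq l false in
  waiting_pmf p S (m + (k + l))%N = avoid_prob S m * word_prob p S.
Proof.
move=> k_gt0 l_gt0 S; rewrite /waiting_pmf /avoid_prob big_mkcond mulr_suml [RHS]big_mkcond.
rewrite (sum_tuple_cat m (k + l) (fun w => if first_occ_at S w then word_prob p w else 0)).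
apply: eq_bigr => w _.
under eq_bigr => v _ do rewrite first_occ_at_heads_tails ?size_tuple //.
have size_S : size S == (k + l)%N by rewrite size_heads_tails.
rewrite (bigD1 (Tuple size_S)) //= eqxx big1 ?addr0 => [|v v_S]; last first.
  by rewrite ifN // negb_and; apply/orP; left; apply: contra v_S => /eqP v_S; apply/eqP/val_inj.
by case: (infix S w); rewrite /= ?mul0r // word_prob_cat.
Qed.

End WaitingTime.

Lemma moment_partial_heads (R : realType) (p : R) (k n : nat) :
  0 < p -> p <= 1 -> (0 < k)%N ->
  moment_partial p (nseq k true) n @ \oo -->
  \sum_(P in set_partitions n) (-1) ^+ (n - #|P|) * (#|P|)`!%:R *
     \prod_(B in P) \sum_(1 <= i < k.+1) ((i%:R ^+ #|B| - (i.-1)%:R ^+ #|B|) / p ^+ i).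
Proof.
move=> p_gt0 p_le1 k_gt0; have p_ge0 := ltW p_gt0.
apply: (@partial_moment_cvg_partitions _ _ (avoid_prob p (nseq k true))
  (fun i => (p ^+ i)^-1) k).
- exact: k_gt0.
- by move=> m; exact: waiting_pmf_ge0.
- by move=> m; exact: avoid_prob_ge0.
- by apply: avoid_prob0; rewrite -size_eq0 size_nseq -lt0n.
- exact: avoid_probS.
- by move=> m m_lt; apply: waiting_pmf_lt_size; rewrite size_nseq.
- by move=> m; apply: avoid_prob_heads_renewal => //; rewrite gt_eqF.
Qed.

Lemma moment_partial_heads_tails (R : realType) (p : R) (k l n : nat) :
  0 < p -> p < 1 -> (0 < k)%N -> (0 < l)%N ->
  moment_partial p (nseq k true ++ nseq l false) n @ \oo -->
  \sum_(P in set_partitions n) (-1) ^+ (n - #|P|) * (#|P|)`!%:R *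
     \prod_(B in P) (((k + l)%:R ^+ #|B| - (k + l).-1%:R ^+ #|B|) / (p ^+ k * (1 - p) ^+ l)).
Proof.
move=> p_gt0 p_lt1 k_gt0 l_gt0; have p_ge0 := ltW p_gt0; have p_le1 := ltW p_lt1.
set S := nseq k true ++ nseq l false.
have kl_gt0 : (0 < k + l)%N by rewrite addn_gt0 k_gt0.
have wS : word_prob p S = p ^+ k * (1 - p) ^+ l by rewrite word_prob_cat !word_prob_nseq.
have wS_neq0 : word_prob p S != 0.
  by rewrite wS mulf_neq0 // expf_neq0 // ?gt_eqF // subr_gt0.
pose a i := if i == (k + l)%N then (word_prob p S)^-1 else 0.
have sum_a (f : nat -> R) : \sum_(1 <= i < (k + l).+1) f i * a i = f (k + l)%N / word_prob p S.
  rewrite big_nat_recr //= big1_seq ?add0r => [|i]; first by rewrite /a eqxx.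
  by rewrite mem_index_iota /a => /andP[_ /andP[_ /ltn_eqF ->]]; rewrite mulr0.
have c_eq j : ((k + l)%:R ^+ j - (k + l).-1%:R ^+ j) / (p ^+ k * (1 - p) ^+ l) =
    \sum_(1 <= i < (k + l).+1) (i%:R ^+ j - i.-1%:R ^+ j) * a i.
  by rewrite (sum_a (fun i => i%:R ^+ j - i.-1%:R ^+ j)) wS.
under eq_bigr => P _ do under eq_bigr => B _ do rewrite c_eq.
apply: (@partial_moment_cvg_partitions _ _ (avoid_prob p S) a (k + l)).
- exact: kl_gt0.
- by move=> m; exact: waiting_pmf_ge0.
- by move=> m; exact: avoid_prob_ge0.
- by apply: avoid_prob0; rewrite -size_eq0 size_heads_tails -lt0n.
- exact: avoid_probS.
- by move=> m m_lt; apply: waiting_pmf_lt_size; rewrite size_heads_tails.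
- move=> m; rewrite (sum_a (fun i => waiting_pmf p S (m + i)%N)).
  by rewrite waiting_pmf_heads_tails // mulfK.
Qed.

Theorem corollary4p12 (R : realType) (p : R) (hp0 : 0 < p) (hp1 : p < 1)
  (n : nat) (hn : (1 <= n)%N) :
  (forall k : nat, (1 <= k)%N ->
     moment_partial p (nseq k true) n @ \oo -->
     \sum_(P in set_partitions n)
        (-1) ^+ (n - #|P|) * (#|P|)`!%:R *
        \prod_(B in P) \sum_(1 <= i < k.+1)
            ((i%:R ^+ #|B| - (i.-1)%:R ^+ #|B|) / p ^+ i)) /\
  (forall k l : nat, (1 <= k)%N -> (1 <= l)%N ->
     moment_partial p (nseq k true ++ nseq l false) n @ \oo -->
     \sum_(P in set_partitions n)
        (-1) ^+ (n - #|P|) * (#|P|)`!%:R *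
        \prod_(B in P)
            (((k + l)%:R ^+ #|B| - (k + l).-1%:R ^+ #|B|)
               / (p ^+ k * (1 - p) ^+ l))).
Proof.
split=> [k k_gt0 | k l k_gt0 l_gt0].
- exact: moment_partial_heads (ltW hp1) k_gt0.
- exact: moment_partial_heads_tails.
Qed.
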